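(* Let $\mathbb{Z}$ be a finite-dimensional Euclidean space, $L>0$, $G:\mathbb{Z}\to\mathbb{Z}$ $\frac1L$-co-coercive with a zero $z^*$ ($G(z^* )=0$). Let $\gamma_k\ge0$ be such that $\sum_{k\ge0}(k+1)^2\gamma_k^2<\infty$. Let $\{z^k\}$ be generated from $z^0\in\mathbb{Z}$ by: for $k\ge 0$, choose $\tilde z^k$ with $\|G(z^k)-\tilde z^k\|\le\gamma_k$ and set $z^{k+1}=\beta_k z^0+(1-\beta_k)z^k-\eta_k\tilde z^k$ with $\beta_k=1/(k+2)$, $\eta_k=(1-\beta_k)/L$. Then $\|G(z^k)\|\le O(k^{-1})$ and $\|z^{k+1}-z^k\|\le O(k^{-1})$ for $k\ge0$; i.e., there is a constant $C>0$ independent of $k$ with $\|G(z^k)\|\le C/(k+1)$ and $\|z^{k+1}-z^k\|\le C/(k+1)$ for all $k\ge0$.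
   Context: A map $G:\mathbb{Z}\to\mathbb{Z}$ is $c$-co-coercive if $\langle G(x_1)-G(x_2),x_1-x_2\rangle\ge c\|G(x_1)-G(x_2)\|^2$ for all $x_1,x_2$. *)

From HB Require Import structures.
From mathcomp Require Import all_boot all_order all_algebra.
From mathcomp Require Import all_classical all_reals all_analysis.
Set Implicit Arguments. Unset Strict Implicit. Unset Printing Implicit Defensive.
Import Order.TTheory GRing.Theory Num.Theory.
Local Open Scope ring_scope.

(* The finite-dimensional Euclidean space is modelled as R^n = 'rV[R]_n
   with the standard inner product. *)
Definition inner (R : realType) (n : nat) (u v : 'rV[R]_n) : R :=
  \sum_(i < n) u ord0 i * v ord0 i.

Definition enorm (R : realType) (n : nat) (u : 'rV[R]_n) : R :=
  Num.sqrt (inner u u).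

Definition cocoercive (R : realType) (n : nat) (c : R)
  (G : 'rV[R]_n -> 'rV[R]_n) : Prop :=
  forall x1 x2 : 'rV[R]_n,
    inner (G x1 - G x2) (x1 - x2) >= c * (enorm (G x1 - G x2)) ^+ 2.

From HB Require Import structures.
From mathcomp Require Import all_boot all_order all_algebra.
From mathcomp Require Import all_classical all_reals all_analysis.
From mathcomp Require Import ring lra.
Set Implicit Arguments. Unset Strict Implicit. Unset Printing Implicit Defensive.
Import Order.TTheory GRing.Theory Num.Theory numFieldNormedType.Exports.
Local Open Scope ring_scope.

(* Dividing G by L makes it firmly nonexpansive, so assume L = 1 and write
   g_k = G z_k, a_k = (k+1)|g_k|, r = |z_0 - z*|, S = sum_j (j+1)^2 gamma_j^2.
   Along the Halpern iteration the potential
     V_k = k(k+1)/2 |g_k|^2 + (k+1) <g_k, z_k - z_0>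
   would be nonincreasing for exact steps (by firm nonexpansiveness); the
   inexact step costs at most (k+1)^2 gamma_k^2 + a_k gamma_k.  Since
   <g_k, z_k - z*> >= |g_k|^2, also V_k >= a_k^2/2 - r a_k, whence
     a_k^2 <= 2 r a_k + 2 S + 2 sum_{j<k} a_j gamma_j.
   As sum_j gamma_j <= 1 + S, evaluating this at a running maximum of a bounds
   a_k uniformly.  Finally |z_k - z*| <= r + sum_j gamma_j, and the update rule
   writes z_{k+1} - z_k through z_0 - z_k, g_k and g_k - z~_k. *)

(* Reduces an identity between linear combinations of [inner] terms to an
   identity between their coordinates. *)
Ltac inner_coordinatewise := apply/eqP; rewrite -subr_eq0 /inner;
  do 4 rewrite ?mulr_sumr -?sumrN -?big_split /=;
  apply/eqP; apply: big1 => i _; rewrite ?mxE.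

Section Euclidean.
Variables (R : realType) (n : nat).
Implicit Types (u v x y : 'rV[R]_n) (c : R).

Lemma innerC u v : inner u v = inner v u.
Proof. by inner_coordinatewise; ring. Qed.

Lemma innerZl c u v : inner (c *: u) v = c * inner u v.
Proof. by inner_coordinatewise; ring. Qed.

Lemma inner0r u : inner u 0 = 0.
Proof. by apply: big1 => i _; rewrite mxE mulr0. Qed.

Lemma inner_self_ge0 u : 0 <= inner u u.
Proof. by apply: sumr_ge0 => i _; rewrite -expr2 sqr_ge0. Qed.

Lemma inner_self_eq0 u : inner u u = 0 -> u = 0.
Proof.
move=> /psumr_eq0P u0; apply/rowP => i; rewrite mxE.
by apply/eqP; rewrite -sqrf_eq0 expr2 u0 // => j _; rewrite -expr2 sqr_ge0.
Qed.

Lemma enorm_ge0 u : 0 <= enorm u.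
Proof. exact: sqrtr_ge0. Qed.

Lemma enorm_sqr u : enorm u ^+ 2 = inner u u.
Proof. by rewrite sqr_sqrtr // inner_self_ge0. Qed.

Lemma enorm_le_sqr u c : 0 <= c -> inner u u <= c ^+ 2 -> enorm u <= c.
Proof. by move=> c0 uc; rewrite -(ger0_norm c0) -sqrtr_sqr ler_sqrt // sqr_ge0. Qed.

Lemma enormZ c u : enorm (c *: u) = `|c| * enorm u.
Proof.
rewrite /enorm -sqrtr_sqr -sqrtrM ?sqr_ge0 //; congr Num.sqrt.
by inner_coordinatewise; ring.
Qed.

Lemma enormN u : enorm (- u) = enorm u.
Proof. by rewrite -scaleN1r enormZ normrN1 mul1r. Qed.

Lemma CauchySchwarz_inner u v : inner u v <= enorm u * enorm v.
Proof.
set a := enorm u; set b := enorm v.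
have ab_ge0 : 0 <= a * b by rewrite mulr_ge0 ?enorm_ge0.
have [/eqP|abNZ] := eqVneq (a * b) 0.
  rewrite mulf_eq0 => /orP[] /eqP /(congr1 (fun t => t ^+ 2)).
    by rewrite enorm_sqr expr0n => /inner_self_eq0 u0; rewrite u0 innerC inner0r.
  by rewrite enorm_sqr expr0n => /inner_self_eq0 v0; rewrite v0 inner0r.
have ab_gt0 : 0 < a * b by rewrite lt_def abNZ.
have expand : inner (b *: u - a *: v) (b *: u - a *: v)
    = 2 * (a * b) * (a * b - inner u v).
  transitivity (b ^+ 2 * inner u u - 2 * a * b * inner u v + a ^+ 2 * inner v v).
    by inner_coordinatewise; ring.
  by rewrite -!enorm_sqr -/a -/b; ring.
have := inner_self_ge0 (b *: u - a *: v).
by rewrite expand pmulr_rge0 ?subr_ge0 // mulr_gt0.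
Qed.

Lemma ler_enormD u v : enorm (u + v) <= enorm u + enorm v.
Proof.
apply: enorm_le_sqr; first by rewrite addr_ge0 ?enorm_ge0.
have -> : inner (u + v) (u + v) = inner u u + 2 * inner u v + inner v v.
  by inner_coordinatewise; ring.
by have := CauchySchwarz_inner u v; rewrite -!enorm_sqr; lra.
Qed.

Definition firmly_nonexpansive (F : 'rV[R]_n -> 'rV[R]_n) : Prop :=
  forall x y, inner (F x - F y) (F x - F y) <= inner (F x - F y) (x - y).

Lemma cocoercive_firmly_nonexpansive c (G : 'rV[R]_n -> 'rV[R]_n) :
  0 < c -> cocoercive c G -> firmly_nonexpansive (fun x => c *: G x).
Proof.
move=> c_gt0 cocoG x y; rewrite -scalerBr; set d := G x - G y.
have -> : inner (c *: d) (c *: d) = c * (c * inner d d).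
  by inner_coordinatewise; ring.
rewrite innerZl; apply: ler_wpM2l; first exact: ltW.
by have := cocoG x y; rewrite enorm_sqr.
Qed.

Lemma nonexpansive_id_sub (F : 'rV[R]_n -> 'rV[R]_n) x y :
  firmly_nonexpansive F -> enorm (x - F x - (y - F y)) <= enorm (x - y).
Proof.
move=> firmF; apply: enorm_le_sqr; first exact: enorm_ge0.
have -> : inner (x - F x - (y - F y)) (x - F x - (y - F y)) =
    inner (x - y) (x - y) - 2 * inner (F x - F y) (x - y)
    + inner (F x - F y) (F x - F y) by inner_coordinatewise; ring.
by have := firmF x y; have := inner_self_ge0 (F x - F y); rewrite enorm_sqr; lra.
Qed.

Definition halpern_potential (k : nat) (g zk z0 : 'rV[R]_n) : R :=
  k%:R * k.+1%:R / 2 * inner g g + k.+1%:R * inner g (zk - z0).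

Lemma halpern_potential_succ k (z0 zk zt z1 g g' : 'rV[R]_n) :
  z1 = (k.+2%:R)^-1 *: z0 + (1 - (k.+2%:R)^-1) *: zk
       - (1 - (k.+2%:R)^-1) *: zt ->
  inner (g' - g) (g' - g) <= inner (g' - g) (z1 - zk) ->
  halpern_potential k.+1 g' z1 z0 <= halpern_potential k g zk z0
    + (k.+1%:R * k.+2%:R / 2 * inner (g - zt) (g - zt)
       + k.+1%:R * inner g (g - zt)).
Proof.
move=> z1E firm; rewrite -subr_ge0.
have k2_neq0 : k%:R + 1 + 1 != 0 :> R by rewrite !natr1 pnatr_eq0.
have -> : halpern_potential k g zk z0
    + (k.+1%:R * k.+2%:R / 2 * inner (g - zt) (g - zt)
       + k.+1%:R * inner g (g - zt)) - halpern_potential k.+1 g' z1 z0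
  = k.+1%:R * k.+2%:R * (inner (g' - g) (z1 - zk) - inner (g' - g) (g' - g))
    + k.+1%:R * k.+2%:R / 2 * inner (g' - g - (g - zt)) (g' - g - (g - zt)).
  rewrite /halpern_potential z1E -!natr1.
  by inner_coordinatewise; field.
by rewrite addr_ge0 ?mulr_ge0 ?inner_self_ge0 ?subr_ge0.
Qed.

Lemma halpern_potential_ge k (g zk z0 zstar : 'rV[R]_n) :
  inner g g <= inner g (zk - zstar) ->
  (k.+1%:R * enorm g) ^+ 2 / 2 - enorm (z0 - zstar) * (k.+1%:R * enorm g)
    <= halpern_potential k g zk z0.
Proof.
move=> g_zstar; rewrite /halpern_potential.
have -> : inner g (zk - z0) = inner g (zk - zstar) - inner g (z0 - zstar).
  by inner_coordinatewise; ring.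
have := CauchySchwarz_inner g (z0 - zstar).
move: g_zstar; rewrite -natr1 -!enorm_sqr.
have k_ge0 : 0 <= k%:R :> R by rewrite ler0n.
have := enorm_ge0 g; have := enorm_ge0 (z0 - zstar).
set q := enorm g; set r := enorm (z0 - zstar).
set p := inner g (zk - zstar); set s := inner g (z0 - zstar) => r_ge0 q_ge0 qp sr.
have X : 0 <= (k%:R + 1) * (p - q ^+ 2) by rewrite mulr_ge0 ?subr_ge0 ?addr_ge0.
have Y : 0 <= (k%:R + 1) * (q * r - s) by rewrite mulr_ge0 ?subr_ge0 ?addr_ge0.
have Z : 0 <= (k%:R + 1) * q ^+ 2 by rewrite mulr_ge0 ?sqr_ge0 ?addr_ge0.
lra.
Qed.

End Euclidean.

Section RealSequences.
Variable R : realFieldType.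
Implicit Types (a c : nat -> R).

Lemma series_le_limn (f : nat -> R) :
  (forall k, 0 <= f k) -> cvgn (series f) ->
  forall k, \sum_(j < k) f j <= limn (series f).
Proof.
move=> f_ge0 f_cvg k; rewrite -(big_mkord xpredT).
exact: nondecreasing_cvgn_le (nondecreasing_series _) f_cvg k.
Qed.

Lemma sum_le_of_weighted_sqr c S :
  (forall k, 0 <= c k) ->
  (forall k, \sum_(j < k) j.+1%:R ^+ 2 * c j ^+ 2 <= S) ->
  forall k, \sum_(j < k) c j <= 1 + S.
Proof.
move=> c_ge0 cS k.
have pointwise j : c j <= (j.+1%:R^-1 - j.+2%:R^-1) + j.+1%:R ^+ 2 * c j ^+ 2.
  rewrite -[j.+2%:R]natr1.
  have y_ge1 : 1 <= j.+1%:R :> R by rewrite ler1n.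
  move: (j.+1%:R) (c j) y_ge1 (c_ge0 j) => y x y_ge1 x_ge0.
  have y_gt0 : 0 < y by apply: lt_le_trans y_ge1.
  have yy_gt0 : 0 < y * (y + 1) by rewrite mulr_gt0 ?addr_gt0.
  have -> : y^-1 - (y + 1)^-1 = (y * (y + 1))^-1.
    by field; rewrite gt_eqF ?addr_gt0 ?gt_eqF.
  rewrite -(ler_pM2l yy_gt0) [X in _ <= X]mulrDr mulfV ?gt_eqF //.
  (* AM-GM gives 2 y (y+1) x <= 1 + (y (y+1) x)^2, and y + 1 <= 2 y. *)
  have := sqr_ge0 (y * (y + 1) * x - 1).
  have : 0 <= (y * x) ^+ 2 * (y + 1) * (y - 1).
    by have y_ge0 := ltW y_gt0; rewrite !mulr_ge0 ?sqr_ge0 ?subr_ge0 ?addr_ge0.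
  nra.
have telescope : \sum_(j < k) (j.+1%:R^-1 - j.+2%:R^-1) = 1 - k.+1%:R^-1 :> R.
  rewrite -(big_mkord xpredT (fun j => j.+1%:R^-1 - j.+2%:R^-1)).
  under eq_bigr do rewrite -opprB.
  by rewrite sumrN telescope_sumr // opprB invr1.
rewrite (le_trans (ler_sum _ (fun (j : 'I_k) _ => pointwise j))) //.
rewrite big_split /= telescope; apply: lerD (cS k).
by rewrite gerBl invr_ge0.
Qed.

Lemma bounded_of_bounded_at_running_max a K :
  (forall k, (forall j, (j < k)%N -> a j <= a k) -> a k <= K) ->
  forall k, a k <= K.
Proof.
move=> at_max; elim/ltn_ind => k IH.
have [[j jk akj] | no_larger] := pselect (exists2 j, (j < k)%N & a k < a j).
  exact/ltW/(lt_le_trans akj)/IH.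
apply: at_max => j jk; rewrite leNgt; apply/negP => akj.
by apply: no_larger; exists j.
Qed.

Lemma bounded_of_sqr_le_running_sum a c B D S :
  0 <= B -> 0 <= S -> (forall k, 0 <= a k) ->
  (forall k, 0 <= c k) -> (forall k, \sum_(j < k) c j <= D) ->
  (forall k, a k ^+ 2 <= B * a k + S + \sum_(j < k) a j * c j) ->
  forall k, a k <= 1 + B + D + S.
Proof.
move=> B_ge0 S_ge0 a_ge0 c_ge0 cD a_sqr.
have D_ge0 : 0 <= D by have := cD 0%N; rewrite big_ord0.
apply: bounded_of_bounded_at_running_max => k at_max.
have running_sum : \sum_(j < k) a j * c j <= a k * D.
  apply: le_trans (ler_wpM2l (a_ge0 k) (cD k)); rewrite mulr_sumr.
  by apply: ler_sum => j _; rewrite ler_wpM2r ?at_max.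
have := a_sqr k; have := a_ge0 k.
move: (a k) running_sum => x xD x_ge0 x_sqr.
have [x_le1 | x_gt1] := leP x 1; first by lra.
have : x * x <= x * (B + D + S) by nra.
by rewrite ler_pM2l ?(lt_trans ltr01); lra.
Qed.

End RealSequences.

Section InexactHalpern.
Variables (R : realType) (n : nat) (F : 'rV[R]_n -> 'rV[R]_n) (zstar : 'rV[R]_n).
Variables (gamma : nat -> R) (z zt : nat -> 'rV[R]_n) (S : R).
Hypothesis F_firm : firmly_nonexpansive F.
Hypothesis F_zstar : F zstar = 0.
Hypothesis gamma_ge0 : forall k, 0 <= gamma k.
Hypothesis weighted_gamma_le : forall k, \sum_(j < k) j.+1%:R ^+ 2 * gamma j ^+ 2 <= S.
Hypothesis zt_err : forall k, enorm (F (z k) - zt k) <= gamma k.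
Hypothesis z_succ : forall k, z k.+1 =
  (k.+2%:R)^-1 *: z 0%N + (1 - (k.+2%:R)^-1) *: z k - (1 - (k.+2%:R)^-1) *: zt k.

Let r0 := enorm (z 0%N - zstar).
Let a k := k.+1%:R * enorm (F (z k)).
Let V k := halpern_potential k (F (z k)) (z k) (z 0%N).

Lemma S_ge0 : 0 <= S.
Proof. by have := weighted_gamma_le 0; rewrite big_ord0. Qed.

Lemma sum_gamma_le k : \sum_(j < k) gamma j <= 1 + S.
Proof. exact: sum_le_of_weighted_sqr. Qed.

Lemma inner_residual_le k : inner (F (z k)) (F (z k)) <= inner (F (z k)) (z k - zstar).
Proof. by have := F_firm (z k) zstar; rewrite F_zstar subr0. Qed.

Lemma potential_succ_le k :
  V k.+1 <= V k + (k.+1%:R ^+ 2 * gamma k ^+ 2 + a k * gamma k).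
Proof.
apply: le_trans (halpern_potential_succ (z_succ k) (F_firm _ _)) _.
rewrite lerD2l; have k1_ge0 : 0 <= k.+1%:R :> R by rewrite ler0n.
have err_ge0 := enorm_ge0 (F (z k) - zt k).
apply: lerD.
  rewrite -enorm_sqr; apply: ler_pM.
  - by rewrite mulr_ge0 ?invr_ge0 ?mulr_ge0 ?ler0n.
  - exact: sqr_ge0.
  - by rewrite ler_pdivrMr // expr2 -!natr1; have := ler0n R k; nra.
  - by rewrite lerXn2r ?nnegrE ?zt_err.
rewrite /a -mulrA ler_wpM2l //; apply: le_trans (CauchySchwarz_inner _ _) _.
by rewrite ler_wpM2l ?enorm_ge0 ?zt_err.
Qed.

Lemma potential_le_sum k :
  V k <= \sum_(j < k) (j.+1%:R ^+ 2 * gamma j ^+ 2 + a j * gamma j).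
Proof.
elim: k => [|k IH].
  by rewrite big_ord0 /V /halpern_potential subrr inner0r !mul0r mulr0 addr0.
by rewrite big_ord_recr /=; apply: le_trans (potential_succ_le k) _; rewrite lerD2r.
Qed.

Lemma scaled_residual_sqr_le k :
  a k ^+ 2 <= 2 * r0 * a k + 2 * S + \sum_(j < k) a j * (2 * gamma j).
Proof.
have := le_trans (halpern_potential_ge k (z 0%N) (inner_residual_le k))
  (potential_le_sum k).
rewrite big_split /= -/r0 -/(a k); have := weighted_gamma_le k.
under [\sum_(j < k) a j * (2 * gamma j)]eq_bigr do rewrite mulrCA.
rewrite -mulr_sumr; lra.
Qed.

Lemma scaled_residual_le k : a k <= 1 + 2 * r0 + 2 * (1 + S) + 2 * S.
Proof.
apply: (bounded_of_sqr_le_running_sum (c := fun j => 2 * gamma j))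
  scaled_residual_sqr_le k.
- by rewrite mulr_ge0 ?enorm_ge0.
- by rewrite mulr_ge0 ?S_ge0.
- by move=> j; rewrite mulr_ge0 ?ler0n ?enorm_ge0.
- by move=> j; rewrite /a mulr_ge0 ?ler0n ?enorm_ge0.
- by move=> j; rewrite -mulr_sumr ler_wpM2l ?sum_gamma_le.
Qed.

Lemma dist_fixed_point_le k : enorm (z k - zstar) <= r0 + \sum_(j < k) gamma j.
Proof.
elim: k => [|k IH]; first by rewrite big_ord0 addr0.
set b : R := k.+2%:R^-1.
have b_ge0 : 0 <= b by rewrite invr_ge0 ler0n.
have b_le1 : b <= 1 by rewrite invf_le1 ?ler1n ?ltr0n.
have -> : z k.+1 - zstar = b *: (z 0%N - zstar)
    + ((1 - b) *: (z k - F (z k) - (zstar - F zstar)) + (1 - b) *: (F (z k) - zt k)).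
  by rewrite z_succ F_zstar -/b; apply/rowP => i; rewrite !mxE; ring.
have := ler_enormD ((1 - b) *: (z k - F (z k) - (zstar - F zstar)))
  ((1 - b) *: (F (z k) - zt k)).
have := ler_enormD (b *: (z 0%N - zstar))
  ((1 - b) *: (z k - F (z k) - (zstar - F zstar)) + (1 - b) *: (F (z k) - zt k)).
rewrite big_ord_recr /= !enormZ !ger0_norm ?subr_ge0 // -/r0.
have := nonexpansive_id_sub (z k) zstar F_firm.
have := zt_err k; have := enorm_ge0 (F (z k) - zt k).
have : 0 <= \sum_(j < k) gamma j by apply: sumr_ge0.
nra.
Qed.

Lemma scaled_gamma_le k : k.+1%:R * gamma k <= 1 + S.
Proof.
have := weighted_gamma_le k.+1; rewrite big_ord_recr /=.
have : 0 <= \sum_(j < k) j.+1%:R ^+ 2 * gamma j ^+ 2.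
  by apply: sumr_ge0 => j _; rewrite mulr_ge0 ?sqr_ge0.
rewrite -exprMn; have := S_ge0; have := sqr_ge0 (k.+1%:R * gamma k - 1).
lra.
Qed.

Lemma scaled_step_le k :
  k.+1%:R * enorm (z k.+1 - z k) <= (2 * r0 + (1 + S)) + a k + (1 + S).
Proof.
set b : R := k.+2%:R^-1.
have b_ge0 : 0 <= b by rewrite invr_ge0 ler0n.
have b_le1 : b <= 1 by rewrite invf_le1 ?ler1n ?ltr0n.
have k1b_le1 : k.+1%:R * b <= 1 by rewrite ler_pdivrMr ?ltr0n // mul1r ler_nat.
have -> : z k.+1 - z k = b *: (z 0%N - z k)
    + (- ((1 - b) *: F (z k)) + (1 - b) *: (F (z k) - zt k)).
  by rewrite z_succ -/b; apply/rowP => i; rewrite !mxE; ring.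
have start_dist : enorm (z 0%N - z k) <= 2 * r0 + (1 + S).
  have -> : z 0%N - z k = (z 0%N - zstar) + - (z k - zstar) by rewrite opprB addrA subrK.
  apply: le_trans (ler_enormD _ _) _; rewrite enormN -/r0.
  by have := dist_fixed_point_le k; have := sum_gamma_le k; lra.
have := ler_enormD (- ((1 - b) *: F (z k))) ((1 - b) *: (F (z k) - zt k)).
have := ler_enormD (b *: (z 0%N - z k))
  (- ((1 - b) *: F (z k)) + (1 - b) *: (F (z k) - zt k)).
rewrite enormN !enormZ !ger0_norm ?subr_ge0 // => triangle1 triangle2.
have y_ge0 : 0 <= k.+1%:R :> R by rewrite ler0n.
have start_term : k.+1%:R * b * enorm (z 0%N - z k) <= enorm (z 0%N - z k).
  by rewrite ler_piMl ?enorm_ge0.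
have residual_term : k.+1%:R * ((1 - b) * enorm (F (z k))) <= a k.
  by rewrite ler_wpM2l // ler_piMl ?enorm_ge0 // gerBl.
have error_term : k.+1%:R * ((1 - b) * enorm (F (z k) - zt k)) <= 1 + S.
  apply: le_trans (scaled_gamma_le k); rewrite ler_wpM2l //.
  by apply: le_trans (zt_err k); rewrite ler_piMl ?enorm_ge0 // gerBl.
have := ler_wpM2l y_ge0 (le_trans triangle1 (lerD (lexx _) triangle2)).
rewrite mulrDr mulrA [k.+1%:R * (_ + _)]mulrDr; lra.
Qed.

Theorem inexact_halpern_rate : exists C, 0 < C /\ forall k,
  k.+1%:R * enorm (F (z k)) <= C /\ k.+1%:R * enorm (z k.+1 - z k) <= C.
Proof.
pose C := (1 + 2 * r0 + 2 * (1 + S) + 2 * S) + (2 * r0 + (1 + S)) + (1 + S).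
have r0_ge0 : 0 <= r0 := enorm_ge0 _.
have S0 := S_ge0.
exists C; split; first by rewrite /C; lra.
move=> k; have := scaled_residual_le k; have := scaled_step_le k.
have := enorm_ge0 (F (z k)); rewrite /C /a; lra.
Qed.

End InexactHalpern.

Theorem corollary3 (R : realType) (n : nat) (L : R) (G : 'rV[R]_n -> 'rV[R]_n)
  (zstar : 'rV[R]_n) (gamma : nat -> R) (z zt : nat -> 'rV[R]_n) :
  0 < L ->
  cocoercive L^-1 G ->
  G zstar = 0 ->
  (forall k, 0 <= gamma k) ->
  cvgn (series (fun k : nat => (k.+1%:R) ^+ 2 * gamma k ^+ 2)) ->
  (forall k, enorm (G (z k) - zt k) <= gamma k) ->
  (forall k, z k.+1 =
     (k.+2%:R)^-1 *: z 0%N + (1 - (k.+2%:R)^-1) *: z k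
     - ((1 - (k.+2%:R)^-1) / L) *: zt k) ->
  exists C : R, 0 < C /\
    forall k : nat, enorm (G (z k)) <= C / k.+1%:R /\
                    enorm (z k.+1 - z k) <= C / k.+1%:R.
Proof.
move=> L_gt0 cocoG G_zstar gamma_ge0 gamma_cvg zt_err z_succ.
have L_ge0 := ltW L_gt0; have Linv_gt0 : 0 < L^-1 by rewrite invr_gt0.
set F := fun x => L^-1 *: G x.
have F_zstar : F zstar = 0 by rewrite /F G_zstar scaler0.
have scaled_gamma_ge0 k : 0 <= gamma k / L by rewrite divr_ge0.
have scaled_weighted_le k :
    \sum_(j < k) j.+1%:R ^+ 2 * (gamma j / L) ^+ 2
    <= limn (series (fun k : nat => k.+1%:R ^+ 2 * gamma k ^+ 2)) / L ^+ 2.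
  under eq_bigr do rewrite expr_div_n mulrA.
  rewrite -mulr_suml ler_wpM2r ?invr_ge0 ?sqr_ge0 //.
  by apply: series_le_limn => // j; rewrite mulr_ge0 ?sqr_ge0.
have scaled_err k : enorm (F (z k) - L^-1 *: zt k) <= gamma k / L.
  by rewrite /F -scalerBr enormZ gtr0_norm // mulrC ler_wpM2r ?invr_ge0.
have scaled_succ k : z k.+1 = (k.+2%:R)^-1 *: z 0%N + (1 - (k.+2%:R)^-1) *: z k
    - (1 - (k.+2%:R)^-1) *: (L^-1 *: zt k) by rewrite z_succ scalerA.
have [C [C_gt0 rate]] := inexact_halpern_rate
  (cocoercive_firmly_nonexpansive Linv_gt0 cocoG) F_zstar scaled_gamma_ge0
  scaled_weighted_le scaled_err scaled_succ.
exists ((L + 1) * C); split; first by rewrite mulr_gt0 ?addr_gt0.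
move=> k; have [residual_le step_le] := rate k.
have k1_gt0 : 0 < k.+1%:R :> R by rewrite ltr0n.
have G_F : enorm (G (z k)) = L * enorm (F (z k)).
  by rewrite /F enormZ gtr0_norm // mulrA mulfV ?gt_eqF // mul1r.
rewrite !ler_pdivlMr // G_F; have := enorm_ge0 (F (z k)).
have := enorm_ge0 (z k.+1 - z k); nra.
Qed.
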